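(* Let $\mathfrak A$ and $\mathcal A$ be Banach algebras with $\mathcal A$ a Banach $\mathfrak A$-bimodule with compatible actions, and let $J$ be the closed ideal of $\mathcal A$ generated by $\{(a\cdot\alpha)b-a(\alpha\cdot b): a,b\in\mathcal A,\alpha\in\mathfrak A\}$. Then $\mathcal A$ is $\mathfrak A$-module uniformly approximately amenable if and only if $\mathcal A/J$ is $\mathfrak A$-module uniformly approximately amenable; and $\mathcal A$ is $\mathfrak A$-module uniformly approximately contractible if and only if $\mathcal A/J$ is $\mathfrak A$-module uniformly approximately contractible.
   Context: Compatible actions: $\alpha\cdot(ab)=(\alpha\cdot a)b$, $(ab)\cdot\alpha=a(b\cdot\alpha)$. $J$ is an $\mathfrak A$-submodule, so $\mathcal A/J$ is a Banach algebra and Banach $\mathfrak A$-bimodule with the induced actions. For a Banach algebra $\mathcal C$ that is a $\mathfrak A$-bimodule with compatible actions, a Banach $\mathcal C$-$\mathfrak A$-module is a Banach space $X$ which is a $\mathcal C$-bimodule and $\mathfrak A$-bimodule with $\alpha\cdot(c\cdot x)=(\alpha\cdot c)\cdot x$, $c\cdot(\alpha\cdot x)=(c\cdot\alpha)\cdot x$, $c\cdot(x\cdot\alpha)=(c\cdot x)\cdot\alpha$ and analogous right identities; commutative if $\alpha\cdot x=x\cdot\alpha$; $X^*$ has dual actions. A module derivation $D:\mathcal C\to Y$ is additive, bounded ($\|D(c)\|\le M\|c\|$), with $D(cd)=D(c)\cdot d+c\cdot D(d)$, $D(\alpha\cdot c)=\alpha\cdot D(c)$, $D(c\cdot\alpha)=D(c)\cdot\alpha$.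 $\mathcal C$ is $\mathfrak A$-module uniformly approximately amenable (resp. contractible) if for every commutative Banach $\mathcal C$-$\mathfrak A$-module $X$ and every module derivation $D:\mathcal C\to X^*$ (resp. $D:\mathcal C\to X$) there is a net $(y_i)$ in $X^*$ (resp. $X$) with $\sup_{\|c\|\le1}\|D(c)-(c\cdot y_i-y_i\cdot c)\|\to0$. *)

From HB Require Import structures.
From mathcomp Require Import all_boot all_order all_algebra.
From mathcomp Require Import all_classical all_reals.
From mathcomp Require Import topology normedtype.
Set Implicit Arguments. Unset Strict Implicit. Unset Printing Implicit Defensive.
Import Order.TTheory GRing.Theory Num.Theory.
Import numFieldNormedType.Exports.
Local Open Scope classical_set_scope.
Local Open Scope ring_scope.

Section BanachModuleDefs.
Variable K : numFieldType.

Definition bilinear_map (U V W : normedModType K) (f : U -> V -> W) :=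
  (forall k u1 u2 v, f (k *: u1 + u2) v = k *: f u1 v + f u2 v) /\
  (forall k u v1 v2, f u (k *: v1 + v2) = k *: f u v1 + f u v2).

Definition bounded_bilinear (U V W : normedModType K) (f : U -> V -> W) :=
  bilinear_map f /\ exists M : K, 0 <= M /\ forall u v, `|f u v| <= M * `|u| * `|v|.

Definition banach_algebra (A : completeNormedModType K) (mul : A -> A -> A) :=
  [/\ bilinear_map mul,
      (forall a b c, mul a (mul b c) = mul (mul a b) c) &
      (forall a b, `|mul a b| <= `|a| * `|b|)].

Definition banach_bimodule (C : normedModType K) (mulC : C -> C -> C)
    (X : normedModType K) (l : C -> X -> X) (r : X -> C -> X) :=
  [/\ bounded_bilinear l, bounded_bilinear (fun c x => r x c),
      (forall c d x, l (mulC c d) x = l c (l d x)),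
      (forall c d x, r x (mulC c d) = r (r x c) d) &
      (forall c d x, r (l c x) d = l c (r x d))].

Definition compatible_actions (U C : normedModType K) (mulC : C -> C -> C)
    (la : U -> C -> C) (ra : C -> U -> C) :=
  (forall al a b, la al (mulC a b) = mulC (la al a) b) /\
  (forall al a b, ra (mulC a b) al = mulC a (ra b al)).

Definition banach_CU_module (U : normedModType K) (mulU : U -> U -> U)
    (C : normedModType K) (mulC : C -> C -> C)
    (laC : U -> C -> C) (raC : C -> U -> C)
    (X : normedModType K) (lC : C -> X -> X) (rC : X -> C -> X)
    (lU : U -> X -> X) (rU : X -> U -> X) :=
  [/\ banach_bimodule mulC lC rC, banach_bimodule mulU lU rU,
      [/\ (forall al c x, lU al (lC c x) = lC (laC al c) x),
           (forall al c x, lC c (lU al x) = lC (raC c al) x) &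
           (forall al c x, lC c (rU x al) = rU (lC c x) al)] &
      [/\ (forall al c x, rU (rC x c) al = rC x (raC c al)),
           (forall al c x, rC (rU x al) c = rC x (laC al c)) &
           (forall al c x, rC (lU al x) c = lU al (rC x c))]].

Definition commutative_module (U X : normedModType K)
    (lU : U -> X -> X) (rU : X -> U -> X) :=
  forall al x, lU al x = rU x al.

Definition dual_elt (X : normedModType K) (f : X -> K) :=
  (forall k x y, f (k *: x + y) = k * f x + f y) /\
  exists M : K, forall x, `|f x| <= M * `|x|.

Definition dual_l (C X : Type) (r : X -> C -> X) (c : C) (f : X -> K) : X -> K :=
  fun x => f (r x c).
Definition dual_r (C X : Type) (l : C -> X -> X) (f : X -> K) (c : C) : X -> K :=
  fun x => f (l c x).

(* D : C -> X^* ; the dual norm inequality ||D c|| <= M ||c|| is written out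
   as |D c x| <= M ||c|| ||x||. *)
Definition module_derivation_dual (U C : normedModType K)
    (mulC : C -> C -> C) (laC : U -> C -> C) (raC : C -> U -> C)
    (X : normedModType K) (lC : C -> X -> X) (rC : X -> C -> X)
    (lU : U -> X -> X) (rU : X -> U -> X) (D : C -> X -> K) :=
  (forall c, dual_elt (D c)) /\
  [/\ (forall c d x, D (c + d) x = D c x + D d x),
      (exists M : K, forall c x, `|D c x| <= M * `|c| * `|x|),
      (forall c d x, D (mulC c d) x = dual_r lC (D c) d x + dual_l rC c (D d) x),
      (forall al c x, D (laC al c) x = dual_l rU al (D c) x) &
      (forall al c x, D (raC c al) x = dual_r lU (D c) al x)].

Definition module_derivation (U C : normedModType K)
    (mulC : C -> C -> C) (laC : U -> C -> C) (raC : C -> U -> C)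
    (X : normedModType K) (lC : C -> X -> X) (rC : X -> C -> X)
    (lU : U -> X -> X) (rU : X -> U -> X) (D : C -> X) :=
  [/\ (forall c d, D (c + d) = D c + D d),
      (exists M : K, forall c, `|D c| <= M * `|c|),
      (forall c d, D (mulC c d) = rC (D c) d + lC c (D d)),
      (forall al c, D (laC al c) = lU al (D c)) &
      (forall al c, D (raC c al) = rU (D c) al)].

Definition directed_set (I : Type) (le : I -> I -> Prop) :=
  [/\ (exists i : I, True),
      (forall i, le i i),
      (forall i j k, le i j -> le j k -> le i k) &
      (forall i j, exists k, le i k /\ le j k)].

(* sup_{||c||<=1} ||D c - (c.y_i - y_i.c)|| -> 0 along the net, with the
   dual norm written out as a sup over ||x|| <= 1. *)
Definition module_UAA (U : normedModType K) (mulU : U -> U -> U)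
    (C : normedModType K) (mulC : C -> C -> C)
    (laC : U -> C -> C) (raC : C -> U -> C) :=
  forall (X : completeNormedModType K) (lC : C -> X -> X) (rC : X -> C -> X)
         (lU : U -> X -> X) (rU : X -> U -> X),
  banach_CU_module mulU mulC laC raC lC rC lU rU ->
  commutative_module lU rU ->
  forall D : C -> X -> K,
  module_derivation_dual mulC laC raC lC rC lU rU D ->
  exists (I : Type) (le : I -> I -> Prop) (y : I -> X -> K),
    [/\ directed_set le, (forall i, dual_elt (y i)) &
    forall eps : K, 0 < eps -> exists i0, forall i, le i0 i ->
      forall c x, `|c| <= 1 -> `|x| <= 1 ->
      `|D c x - (dual_l rC c (y i) x - dual_r lC (y i) c x)| <= eps].

Definition module_UAC (U : normedModType K) (mulU : U -> U -> U)
    (C : normedModType K) (mulC : C -> C -> C)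
    (laC : U -> C -> C) (raC : C -> U -> C) :=
  forall (X : completeNormedModType K) (lC : C -> X -> X) (rC : X -> C -> X)
         (lU : U -> X -> X) (rU : X -> U -> X),
  banach_CU_module mulU mulC laC raC lC rC lU rU ->
  commutative_module lU rU ->
  forall D : C -> X,
  module_derivation mulC laC raC lC rC lU rU D ->
  exists (I : Type) (le : I -> I -> Prop) (y : I -> X),
    [/\ directed_set le &
    forall eps : K, 0 < eps -> exists i0, forall i, le i0 i ->
      forall c, `|c| <= 1 ->
      `|D c - (lC c (y i) - rC (y i) c)| <= eps].

Definition closed_ideal (A : normedModType K) (mul : A -> A -> A) (I : set A) :=
  [/\ closed I, I 0,
      (forall k a b, I a -> I b -> I (k *: a + b)),
      (forall a b, I b -> I (mul a b)) &
      (forall a b, I a -> I (mul a b))].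

Definition gen_closed_ideal (A : normedModType K) (mul : A -> A -> A) (S : set A) : set A :=
  fun a => forall I, closed_ideal mul I -> S `<=` I -> I a.

Definition module_ideal (U A : normedModType K) (mul : A -> A -> A)
    (la : U -> A -> A) (ra : A -> U -> A) : set A :=
  gen_closed_ideal mul
    [set z | exists a b al, z = mul (ra a al) b - mul a (la al b)].

(* (Q, q) realises A/J: q is a surjective linear map with kernel J, Q carries
   the quotient norm ||q a|| = inf_{j in J} ||a + j||, and the product and the
   U-actions on Q are the induced ones. *)
Definition quotient_by (U A : normedModType K) (mulA : A -> A -> A)
    (laA : U -> A -> A) (raA : A -> U -> A) (J : set A)
    (Q : normedModType K) (mulQ : Q -> Q -> Q)
    (laQ : U -> Q -> Q) (raQ : Q -> U -> Q) (q : A -> Q) :=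
  [/\ (forall k a b, q (k *: a + b) = k *: q a + q b),
      (forall z, exists a, q a = z) &
      (forall a, q a = 0 <-> J a)] /\
  [/\
      (forall a j, J j -> `|q a| <= `|a + j|),
      (forall a eps, 0 < eps -> exists j, J j /\ `|a + j| < `|q a| + eps),
      (forall a b, q (mulA a b) = mulQ (q a) (q b)) &
      (forall al a, q (laA al a) = laQ al (q a) /\ q (raA a al) = raQ (q a) al)].

End BanachModuleDefs.

From HB Require Import structures.
From mathcomp Require Import all_boot all_order all_algebra.
From mathcomp Require Import all_classical all_reals.
From mathcomp Require Import topology normedtype.
Import Order.TTheory GRing.Theory Num.Theory.
Import numFieldNormedType.Exports.
Local Open Scope classical_set_scope.
Local Open Scope ring_scope.
Set Implicit Arguments. Unset Strict Implicit. Unset Printing Implicit Defensive.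

(* The generators (a.al)b - a(al.b) of J act trivially on every Banach A-U-module X, by the
   compatibility identities of X; the set of elements of J acting trivially is a closed ideal,
   so all of J annihilates X.  In the same way every module derivation into X or X^* vanishes
   on J.  Hence modules and derivations over A factor through q : A -> A/J, and those over A/J
   pull back along q, so the approximating nets transfer in both directions.  From A to A/J a
   factor 2 is lost: lifts of the unit ball of A/J only fit in the ball of radius 2 of A. *)

Section AdditiveMaps.
Variable K : numFieldType.

Lemma additive0 (V W : zmodType) (g : V -> W) : {morph g : a b / a + b} -> g 0 = 0.
Proof. by move=> gD; apply: (addrI (g 0)); rewrite -gD !addr0. Qed.

Lemma additiveB (V W : zmodType) (g : V -> W) :
  {morph g : a b / a + b} -> {morph g : a b / a - b}.
Proof.
move=> gD a b; rewrite gD; congr (_ + _); apply: (addrI (g b)).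
by rewrite -gD !subrr additive0.
Qed.

Lemma additive_sub_fun (V W : zmodType) (f g : V -> W) :
  {morph f : a b / a + b} -> {morph g : a b / a + b} ->
  {morph (fun c => f c - g c) : a b / a + b}.
Proof. by move=> fD gD a b; rewrite fD gD opprD addrACA. Qed.

Lemma linear_additive (V W : lmodType K) (g : V -> W) :
  linear g -> {morph g : a b / a + b}.
Proof. by move=> gL a b; have := gL 1 a b; rewrite !scale1r. Qed.

Lemma bilinear_linearl (U V W : normedModType K) (f : U -> V -> W) :
  bilinear_map f -> forall v, linear (f^~ v).
Proof. by case=> fl _ v k a b; apply: fl. Qed.

Lemma bilinear_linearr (U V W : normedModType K) (f : U -> V -> W) :
  bilinear_map f -> forall u, linear (f u).
Proof. by case=> _ fr u k a b; apply: fr. Qed.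

Lemma bilinear_scalel (U V W : normedModType K) (f : U -> V -> W) :
  bilinear_map f -> forall k u v, f (k *: u) v = k *: f u v.
Proof. by move=> fB k u v; apply: (scalable_linear (bilinear_linearl fB v)). Qed.

Lemma bilinear_scaler (U V W : normedModType K) (f : U -> V -> W) :
  bilinear_map f -> forall k u v, f u (k *: v) = k *: f u v.
Proof. by move=> fB k u v; apply: (scalable_linear (bilinear_linearr fB u)). Qed.

Lemma dual_elt_additive (X : normedModType K) (f : X -> K) :
  dual_elt f -> {morph f : a b / a + b}.
Proof. by case=> fL _ a b; have := fL 1 a b; rewrite mul1r scale1r. Qed.

Lemma ler_abs_bound (W : normedZmodType K) (w : W) (M x : K) :
  0 <= x -> `|w| <= M * x -> `|w| <= `|M| * x.
Proof.
move=> x0 wM; rewrite -[x in _ * x](ger0_norm x0) -normrM ger0_norm //.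
exact: (le_trans _ wM).
Qed.

Lemma additive_bounded_closed_ker (V : normedModType K) (W : normedZmodType K)
    (g : V -> W) (L : K) :
  {morph g : a b / a + b} -> (forall a, `|g a| <= L * `|a|) ->
  closed [set a | g a = 0].
Proof.
move=> gD gL p clp; apply/eqP; rewrite -normr_le0; apply/ler_addgt0Pr => e e0.
have L1 : 0 < `|L| + 1 by rewrite ltr_wpDl.
have [s [/= gs ps]] := clp _ (nbhsx_ballx p _ (divr_gt0 e0 L1)).
move: ps; rewrite -ball_normE /= => ps.
have -> : p = (p - s) + s by rewrite subrK.
rewrite gD gs addr0 add0r.
apply: (le_trans (ler_abs_bound (normr_ge0 _) (gL _))).
apply: (le_trans (ler_wpM2l (normr_ge0 L) (ltW ps))).
rewrite mulrA ler_pdivrMr // mulrDr mulr1 [e * _]mulrC lerDl; exact: ltW.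
Qed.

End AdditiveMaps.

Section GeneratedClosedIdeal.
Variables (K : numFieldType) (A : normedModType K) (mul : A -> A -> A) (S : set A).

Lemma closed_ideal_gen : closed_ideal mul (gen_closed_ideal mul S).
Proof.
split.
- move=> p clp I Iideal SI; case: (Iideal) => Icl _ _ _ _; apply: Icl.
  by apply: closureS clp => a; apply.
- by move=> I [].
- move=> k a b Ja Jb I Iideal SI; case: (Iideal) => _ _ ID _ _.
  by apply: ID; [apply: Ja|apply: Jb].
- by move=> a b Jb I Iideal SI; case: (Iideal) => _ _ _ IM _; apply: IM; apply: Jb.
- by move=> a b Ja I Iideal SI; case: (Iideal) => _ _ _ _ IM; apply: IM; apply: Ja.
Qed.

Lemma sub_gen_closed_ideal : S `<=` gen_closed_ideal mul S.
Proof. by move=> z Sz I _; apply. Qed.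

Lemma gen_closed_ideal_min (I : set A) :
  closed_ideal mul I -> S `<=` I -> gen_closed_ideal mul S `<=` I.
Proof. by move=> Iideal SI a; apply. Qed.

End GeneratedClosedIdeal.

Definition module_commutators (K : numFieldType) (U A : normedModType K)
    (mul : A -> A -> A) (la : U -> A -> A) (ra : A -> U -> A) : set A :=
  [set z | exists a b al, z = mul (ra a al) b - mul a (la al b)].

Section ModuleIdeal.
Variables (K : numFieldType) (U : normedModType K) (A : completeNormedModType K).
Variable mulU : U -> U -> U.
Variables (mulA : A -> A -> A) (laA : U -> A -> A) (raA : A -> U -> A).
Hypotheses (HA : banach_algebra mulA) (HUA : banach_bimodule mulU laA raA).

Local Notation S := (module_commutators mulA laA raA).
Local Notation J := (module_ideal mulA laA raA).

Lemma module_ideal_scale k j : J j -> J (k *: j).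
Proof.
have [_ J0 JD _ _] := closed_ideal_gen mulA S.
by move=> Jj; rewrite -[k *: j]addr0; apply: JD.
Qed.

Lemma module_commutators_scale k z : S z -> S (k *: z).
Proof.
case: HA => mulB _ _; case: HUA => _ [raB _] _ _ _.
case=> a [b [al ->]]; exists (k *: a), b, al.
by rewrite scalerBr (bilinear_scaler raB) !(bilinear_scalel mulB).
Qed.

Lemma module_ideal_sub_kernels (Idx : Type) (W : normedZmodType K)
    (E : Idx -> A -> W) :
  (forall i, {morph E i : a b / a + b}) ->
  (forall i, exists L, forall a, `|E i a| <= L * `|a|) ->
  (forall i z, S z -> E i z = 0) ->
  (forall a b, J b -> (forall i, E i b = 0) ->
     forall i, E i (mulA a b) = 0 /\ E i (mulA b a) = 0) ->
  forall j, J j -> forall i, E i j = 0.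
Proof.
move=> ED EL ES Emul.
(* The maps [E i] are only additive, so the kernels are tracked along all scalar multiples. *)
pose P := J `&` \bigcap_(ik in [set: Idx * K]) [set j | E ik.1 (ik.2 *: j) = 0].
have Pker j : P j -> forall i k, E i (k *: j) = 0 by move=> [_ Pj] i k; apply: (Pj (i, k)).
suff JP : J `<=` P by move=> j /JP /Pker Pj i; have := Pj i 1; rewrite scale1r.
have [mulB _ _] := HA.
have [Jcl J0 JD JmulL JmulR] := closed_ideal_gen mulA S.
apply: gen_closed_ideal_min; last first.
  move=> z Sz; split; first exact: sub_gen_closed_ideal.
  by move=> [i k] _; apply: ES; apply: module_commutators_scale.
split.
- apply: closedI => //; apply: closed_bigI => -[i k] _ /=.
  have [L EiL] := EL i; apply: (@additive_bounded_closed_ker _ _ _ _ (L * `|k|)).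
    by move=> a b; rewrite scalerDr ED.
  by move=> a; rewrite -mulrA -normrZ; apply: EiL.
- by split => // -[i k] _ /=; rewrite scaler0 additive0.
- move=> m a b [Ja Pa] [Jb Pb]; split; first exact: JD.
  by move=> [i k] _ /=; rewrite scalerDr scalerA ED !Pker ?addr0.
- move=> a b [Jb Pb]; split; first exact: JmulL.
  move=> [i k] _ /=; rewrite -bilinear_scaler //.
  by case: (Emul a _ (module_ideal_scale k Jb) (fun i => Pker b (conj Jb Pb) i k) i).
- move=> a b [Ja Pa]; split; first exact: JmulR.
  move=> [i k] _ /=; rewrite -bilinear_scalel //.
  by case: (Emul b _ (module_ideal_scale k Ja) (fun i => Pker a (conj Ja Pa) i k) i).
Qed.

Section Annihilation.
Variables (X : normedModType K) (lC : A -> X -> X) (rC : X -> A -> X).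
Variables (lU : U -> X -> X) (rU : X -> U -> X).
Hypothesis Hmod : banach_CU_module mulU mulA laA raA lC rC lU rU.

Lemma module_ideal_lact0 j : J j -> forall x, lC j x = 0.
Proof.
have [[[lCB [M [_ lCM]]] _ lCmul _ _] _ [l1 l2 _] _] := Hmod.
move=> Jj x; apply: (@module_ideal_sub_kernels _ _ (fun x j => lC j x) _ _ _ _ _ Jj x).
- by move=> y; apply/linear_additive/bilinear_linearl.
- by move=> y; exists (M * `|y|) => a; rewrite mulrAC; apply: lCM.
- move=> y _ [a [b [al ->]]].
  by rewrite (additiveB (linear_additive (bilinear_linearl lCB y))) !lCmul -l2 l1 subrr.
- move=> a b _ Pb y; rewrite !lCmul !Pb; split=> //.
  exact: (additive0 (linear_additive (bilinear_linearr lCB a))).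
Qed.

Lemma module_ideal_ract0 j : J j -> forall x, rC x j = 0.
Proof.
have [[_ [rCB [M [_ rCM]]] _ rCmul _] _ _ [r1 r2 _]] := Hmod.
move=> Jj x; apply: (@module_ideal_sub_kernels _ _ rC _ _ _ _ _ Jj x).
- by move=> y; apply/linear_additive/(bilinear_linearl rCB).
- by move=> y; exists (M * `|y|) => a; rewrite mulrAC; apply: rCM.
- move=> y _ [a [b [al ->]]].
  by rewrite (additiveB (linear_additive (bilinear_linearl rCB y))) !rCmul -r1 r2 subrr.
- move=> a b _ Pb y; rewrite !rCmul !Pb; split=> //.
  exact: (additive0 (linear_additive (bilinear_linearr rCB a))).
Qed.

Lemma module_derivation_ideal0 (D : A -> X) j :
  module_derivation mulA laA raA lC rC lU rU D -> J j -> D j = 0.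
Proof.
have [[[lCB _] [rCB _] _ _ _] _ [_ l2 _] [_ r2 _]] := Hmod.
move=> [DD [M DM] Dmul Dla Dra] Jj.
apply: (@module_ideal_sub_kernels unit _ (fun _ => D) _ _ _ _ _ Jj tt).
- by move=> _; apply: DD.
- by move=> _; exists M.
- by move=> _ _ [a [b [al ->]]]; rewrite (additiveB DD) !Dmul Dla Dra r2 l2 subrr.
move=> a b Jb /(_ tt) Db _.
rewrite !Dmul Db (module_ideal_ract0 Jb) (module_ideal_lact0 Jb) add0r addr0.
rewrite (additive0 (linear_additive (bilinear_linearr lCB a))).
by rewrite (additive0 (linear_additive (bilinear_linearr rCB a))).
Qed.

Lemma dual_module_derivation_ideal0 (D : A -> X -> K) j :
  module_derivation_dual mulA laA raA lC rC lU rU D -> J j -> forall x, D j x = 0.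
Proof.
have [_ _ [l1 _ _] [r1 _ _]] := Hmod.
move=> [Dx [DD [M DM] Dmul Dla Dra]] Jj x.
apply: (@module_ideal_sub_kernels X _ (fun x c => D c x) _ _ _ _ _ Jj x).
- by move=> y a b; apply: DD.
- by move=> y; exists (M * `|y|) => a; rewrite mulrAC; apply: DM.
- move=> y _ [a [b [al ->]]].
  rewrite (additiveB (fun a b => DD a b y)) !Dmul /dual_l /dual_r Dla Dra /dual_l /dual_r.
  by rewrite l1 -r1 subrr.
move=> a b Jb Db y; rewrite !Dmul /dual_l /dual_r !Db.
rewrite (module_ideal_ract0 Jb) (module_ideal_lact0 Jb).
by rewrite !(additive0 (dual_elt_additive (Dx _))) !addr0.
Qed.

End Annihilation.

End ModuleIdeal.

Section Quotient.
Variables (K : numFieldType) (U : normedModType K) (A : completeNormedModType K).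
Variables (Q : normedModType K) (mulU : U -> U -> U).
Variables (mulA : A -> A -> A) (laA : U -> A -> A) (raA : A -> U -> A).
Variables (mulQ : Q -> Q -> Q) (laQ : U -> Q -> Q) (raQ : Q -> U -> Q) (q : A -> Q).

Local Notation J := (module_ideal mulA laA raA).

Hypothesis Hq : quotient_by mulA laA raA J mulQ laQ raQ q.

Lemma quotient_linear : linear q.
Proof. by case: Hq => [[qL _ _] _]. Qed.

Lemma quotient_additive : {morph q : a b / a + b}.
Proof. exact: (linear_additive quotient_linear). Qed.

Lemma quotient_ideal0 j : J j -> q j = 0.
Proof. by case: Hq => [[_ _ qJ] _] /qJ. Qed.

Lemma quotient_eq_ideal a b : q a = q b -> J (a - b).
Proof.
case: Hq => [[_ _ qJ] _] qab; apply/qJ.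
by rewrite (additiveB quotient_additive) qab subrr.
Qed.

Lemma quotient_norm_le a : `|q a| <= `|a|.
Proof.
case: Hq => [_ [qinf _ _ _]]; rewrite -[X in _ <= `|X|]addr0; apply: qinf.
by case: (closed_ideal_gen mulA (module_commutators mulA laA raA)).
Qed.

Lemma quotient_mul a b : q (mulA a b) = mulQ (q a) (q b).
Proof. by case: Hq => [_ [_ _ qM _]]. Qed.

Lemma quotient_lact al a : q (laA al a) = laQ al (q a).
Proof. by case: Hq => [_ [_ _ _ /(_ al a) []]]. Qed.

Lemma quotient_ract al a : q (raA a al) = raQ (q a) al.
Proof. by case: Hq => [_ [_ _ _ /(_ al a) []]]. Qed.

Definition lift (z : Q) : A :=
  let: exist a _ := cid (match Hq with conj (And3 _ qsurj _) _ => qsurj z end) in a.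

Lemma liftK : cancel lift q.
Proof. by move=> z; rewrite /lift; case: cid. Qed.

Lemma additive_quotient_eq (W : zmodType) (g : A -> W) :
  {morph g : a b / a + b} -> (forall j, J j -> g j = 0) ->
  forall a b, q a = q b -> g a = g b.
Proof.
move=> gD gJ a b /quotient_eq_ideal /gJ.
by rewrite (additiveB gD) => /eqP; rewrite subr_eq0 => /eqP.
Qed.

Lemma quotient_norm_bound (W : normedZmodType K) (g : A -> W) (M : K) :
  {morph g : a b / a + b} -> (forall j, J j -> g j = 0) ->
  (forall a, `|g a| <= M * `|a|) -> forall a, `|g a| <= `|M| * `|q a|.
Proof.
move=> gD gJ gM a; apply/ler_addgt0Pr => e e0.
have M1 : 0 < `|M| + 1 by rewrite ltr_wpDl.
case: Hq => [_ [_ qinf _ _]]; have [j [Jj aj]] := qinf a _ (divr_gt0 e0 M1).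
have -> : g a = g (a + j) by rewrite gD (gJ j Jj) addr0.
apply: (le_trans (ler_abs_bound (normr_ge0 _) (gM _))).
apply: (le_trans (ler_wpM2l (normr_ge0 M) (ltW aj))).
rewrite mulrDr lerD2l mulrA ler_pdivrMr // mulrDr mulr1 [e * _]mulrC lerDl.
exact: ltW.
Qed.

Lemma lift_unit_ball z : `|z| <= 1 -> exists a, q a = z /\ `|a| <= 2.
Proof.
move=> z1; case: Hq => [_ [_ qinf _ _]].
have [j [Jj aj]] := qinf (lift z) 1 ltr01.
exists (lift z + j); split; first by rewrite quotient_additive (quotient_ideal0 Jj) addr0 liftK.
by rewrite (le_trans (ltW aj)) // liftK lerD2r.
Qed.

(* Lifts of the unit ball of the quotient only fill the ball of radius 2, hence the halving. *)
Lemma quotient_unit_ball_bound (V : normedZmodType K) (E : Q -> V) e :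
  {morph E : a b / a + b} -> (forall a, `|a| <= 1 -> `|E (q a)| <= e / 2) ->
  forall z, `|z| <= 1 -> `|E z| <= e.
Proof.
move=> ED Eq z z1; have [a [<- a2]] := lift_unit_ball z1.
have halves : 2^-1 *: a + 2^-1 *: a = a.
  by rewrite -scalerDl -[2^-1]mul1r -splitr scale1r.
have half_le1 : `|2^-1 *: a| <= 1.
  by rewrite normrZ ger0_norm ?invr_ge0 ?ler0n // ler_pdivrMl ?ltr0n // mulr1.
rewrite -halves quotient_additive ED (splitr e).
by apply: (le_trans (ler_normD _ _)); apply: lerD; apply: Eq.
Qed.

Lemma pull_bounded_bilinear (X : normedModType K) (f : Q -> X -> X) :
  bounded_bilinear f -> bounded_bilinear (fun a x => f (q a) x).
Proof.
move=> [[fl fr] [M [M0 fM]]]; split; first split.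
- by move=> k a b x; rewrite quotient_linear fl.
- by move=> k a x y; rewrite fr.
exists M; split => // a x; apply: (le_trans (fM _ _)).
by rewrite ler_wpM2r // ler_wpM2l // quotient_norm_le.
Qed.

Lemma push_bounded_bilinear (X : normedModType K) (f : A -> X -> X) :
  bounded_bilinear f -> (forall j, J j -> forall x, f j x = 0) ->
  bounded_bilinear (fun z x => f (lift z) x).
Proof.
move=> [[fl fr] [M [M0 fM]]] fJ.
have fD x := linear_additive (bilinear_linearl (conj fl fr) x).
split; first split.
- move=> k z1 z2 x; rewrite -fl; apply: (additive_quotient_eq (fD x)) => [j Jj|].
    exact: fJ.
  by rewrite quotient_linear !liftK.
- by move=> k z x y; rewrite fr.
exists M; split => // z x.
have := quotient_norm_bound (fD x) (fun j Jj => fJ j Jj x) (M := M * `|x|) _ (lift z).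
rewrite liftK normrM normr_id (ger0_norm M0) mulrAC; apply.
by move=> a; rewrite mulrAC; apply: fM.
Qed.

Section Pull.
Variables (X : normedModType K) (lC : Q -> X -> X) (rC : X -> Q -> X).
Variables (lU : U -> X -> X) (rU : X -> U -> X).
Hypothesis Hmod : banach_CU_module mulU mulQ laQ raQ lC rC lU rU.

Lemma pull_module :
  banach_CU_module mulU mulA laA raA (fun a x => lC (q a) x) (fun x a => rC x (q a)) lU rU.
Proof.
have [[lCB rCB lCmul rCmul mid] Umod [l1 l2 l3] [r1 r2 r3]] := Hmod.
split=> //; first split.
- exact: pull_bounded_bilinear.
- exact: (pull_bounded_bilinear rCB).
- by move=> c d x; rewrite quotient_mul lCmul.
- by move=> c d x; rewrite quotient_mul rCmul.
- by move=> c d x; apply: mid.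
- by split=> al c x; rewrite ?l1 ?l2 ?l3 ?quotient_lact ?quotient_ract.
- by split=> al c x; rewrite ?r1 ?r2 ?r3 ?quotient_lact ?quotient_ract.
Qed.

Lemma pull_derivation (D : Q -> X) :
  module_derivation mulQ laQ raQ lC rC lU rU D ->
  module_derivation mulA laA raA (fun a x => lC (q a) x) (fun x a => rC x (q a)) lU rU
    (fun a => D (q a)).
Proof.
move=> [DD [M DM] Dmul Dla Dra]; split.
- by move=> c d; rewrite quotient_additive DD.
- exists `|M| => c; apply: (le_trans (ler_abs_bound (normr_ge0 _) (DM _))).
  by rewrite ler_wpM2l // quotient_norm_le.
- by move=> c d; rewrite quotient_mul Dmul.
- by move=> al c; rewrite quotient_lact Dla.
- by move=> al c; rewrite quotient_ract Dra.
Qed.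

Lemma pull_dual_derivation (D : Q -> X -> K) :
  module_derivation_dual mulQ laQ raQ lC rC lU rU D ->
  module_derivation_dual mulA laA raA (fun a x => lC (q a) x) (fun x a => rC x (q a)) lU rU
    (fun a => D (q a)).
Proof.
move=> [Dx [DD [M DM] Dmul Dla Dra]]; split=> [c|]; first exact: Dx.
split.
- by move=> c d x; rewrite quotient_additive DD.
- exists `|M| => c x; rewrite -mulrA.
  apply: (le_trans (ler_abs_bound (mulr_ge0 (normr_ge0 _) (normr_ge0 _)) _)).
    by rewrite mulrA; apply: DM.
  by rewrite ler_wpM2l // ler_wpM2r // quotient_norm_le.
- by move=> c d x; rewrite quotient_mul Dmul.
- by move=> al c x; rewrite quotient_lact Dla.
- by move=> al c x; rewrite quotient_ract Dra.
Qed.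

End Pull.

Section Push.
Hypotheses (HA : banach_algebra mulA) (HUA : banach_bimodule mulU laA raA).
Variables (X : normedModType K) (lC : A -> X -> X) (rC : X -> A -> X).
Variables (lU : U -> X -> X) (rU : X -> U -> X).
Hypothesis Hmod : banach_CU_module mulU mulA laA raA lC rC lU rU.

Let lCB : bounded_bilinear lC. Proof. by case: Hmod => [[]]. Qed.
Let rCB : bounded_bilinear (fun a x => rC x a). Proof. by case: Hmod => [[]]. Qed.

Lemma eq_lact_quotient x a b : q a = q b -> lC a x = lC b x.
Proof.
apply: (@additive_quotient_eq _ (lC^~ x)).
- exact: (linear_additive (bilinear_linearl lCB.1 x)).
- by move=> j Jj; rewrite /= (module_ideal_lact0 HA HUA Hmod Jj).
Qed.

Lemma eq_ract_quotient x a b : q a = q b -> rC x a = rC x b.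
Proof.
apply: (@additive_quotient_eq _ (rC x)).
- exact: (linear_additive (bilinear_linearl rCB.1 x)).
- by move=> j Jj; rewrite (module_ideal_ract0 HA HUA Hmod Jj).
Qed.

Lemma push_module :
  banach_CU_module mulU mulQ laQ raQ (fun z x => lC (lift z) x) (fun x z => rC x (lift z)) lU rU.
Proof.
have [[_ _ lCmul rCmul mid] Umod [l1 l2 l3] [r1 r2 r3]] := Hmod.
split=> //; first split.
- exact: (push_bounded_bilinear lCB (module_ideal_lact0 HA HUA Hmod)).
- exact: (push_bounded_bilinear rCB (fun j Jj x => module_ideal_ract0 HA HUA Hmod Jj x)).
- by move=> c d x; rewrite -lCmul; apply: eq_lact_quotient; rewrite quotient_mul !liftK.
- by move=> c d x; rewrite -rCmul; apply: eq_ract_quotient; rewrite quotient_mul !liftK.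
- by move=> c d x; apply: mid.
- split=> al c x; rewrite ?l1 ?l2 ?l3 //; apply: eq_lact_quotient;
    by rewrite ?quotient_lact ?quotient_ract !liftK.
- split=> al c x; rewrite ?r1 ?r2 ?r3 //; apply: eq_ract_quotient;
    by rewrite ?quotient_lact ?quotient_ract !liftK.
Qed.

Section Derivation.
Variable D : A -> X.
Hypothesis HD : module_derivation mulA laA raA lC rC lU rU D.

Lemma eq_derivation_quotient a b : q a = q b -> D a = D b.
Proof.
case: (HD) => DD _ _ _ _; apply: (additive_quotient_eq DD) => j Jj.
exact: (module_derivation_ideal0 HA HUA Hmod HD Jj).
Qed.

Lemma push_derivation :
  module_derivation mulQ laQ raQ (fun z x => lC (lift z) x) (fun x z => rC x (lift z)) lU rU
    (fun z => D (lift z)).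
Proof.
have [DD [M DM] Dmul Dla Dra] := HD; split.
- by move=> c d; rewrite -DD; apply: eq_derivation_quotient; rewrite quotient_additive !liftK.
- exists `|M| => z; rewrite -[in leRHS](liftK z).
  apply: (quotient_norm_bound DD _ DM) => j Jj.
  exact: (module_derivation_ideal0 HA HUA Hmod HD Jj).
- by move=> c d; rewrite -Dmul; apply: eq_derivation_quotient; rewrite quotient_mul !liftK.
- by move=> al c; rewrite -Dla; apply: eq_derivation_quotient; rewrite quotient_lact !liftK.
- by move=> al c; rewrite -Dra; apply: eq_derivation_quotient; rewrite quotient_ract !liftK.
Qed.

End Derivation.

Section DualDerivation.
Variable D : A -> X -> K.
Hypothesis HD : module_derivation_dual mulA laA raA lC rC lU rU D.

Let D_additive x : {morph D^~ x : a b / a + b}.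
Proof. by case: HD => _ [DD _ _ _ _] a b; apply: DD. Qed.

Let D_ideal0 x j : J j -> D j x = 0.
Proof. by move=> Jj; apply: (dual_module_derivation_ideal0 HA HUA Hmod HD Jj). Qed.

Lemma eq_dual_derivation_quotient x a b : q a = q b -> D a x = D b x.
Proof. exact: (additive_quotient_eq (D_additive x) (D_ideal0 x)). Qed.

Lemma push_dual_derivation :
  module_derivation_dual mulQ laQ raQ (fun z x => lC (lift z) x) (fun x z => rC x (lift z))
    lU rU (fun z => D (lift z)).
Proof.
have [Dx [DD [M DM] Dmul Dla Dra]] := HD; split=> [z|]; first exact: Dx.
rewrite /dual_l /dual_r in Dmul Dla Dra *; split.
- move=> c d x; rewrite -DD; apply: eq_dual_derivation_quotient.
  by rewrite quotient_additive !liftK.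
- exists `|M| => z x; rewrite -[in leRHS](liftK z) mulrAC -normr_id -normrM.
  apply: (quotient_norm_bound (D_additive x) (D_ideal0 x)) => a.
  by rewrite mulrAC; apply: DM.
- move=> c d x; rewrite -Dmul; apply: eq_dual_derivation_quotient.
  by rewrite quotient_mul !liftK.
- by move=> al c x; rewrite -Dla; apply: eq_dual_derivation_quotient; rewrite quotient_lact !liftK.
- by move=> al c x; rewrite -Dra; apply: eq_dual_derivation_quotient; rewrite quotient_ract !liftK.
Qed.

End DualDerivation.

End Push.

Lemma module_UAA_to_quotient :
  module_UAA mulU mulA laA raA -> module_UAA mulU mulQ laQ raQ.
Proof.
move=> AUAA X lC rC lU rU Hmod Hcomm D HD.
have [I [le [y [Idir yx ycvg]]]] :=
  AUAA X _ _ lU rU (pull_module Hmod) Hcomm _ (pull_dual_derivation HD).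
exists I, le, y; split=> // eps eps0.
have [i0 near_i0] := ycvg _ (divr_gt0 eps0 (ltr0Sn _ 1)); exists i0 => i i0i c x c1 x1.
have [_ [DD _ _ _ _]] := HD; have [[[lCB _] [rCB _] _ _ _] _ _ _] := Hmod.
apply: (quotient_unit_ball_bound
  (E := fun z => D z x - (dual_l rC z (y i) x - dual_r lC (y i) z x))) c1 => [|a a1].
  apply: additive_sub_fun => [a b|]; first exact: DD.
  apply: additive_sub_fun => a b; rewrite /dual_l /dual_r -(dual_elt_additive (yx i)).
    by rewrite (linear_additive (bilinear_linearl rCB x)).
  by rewrite (linear_additive (bilinear_linearl lCB x)).
exact: near_i0.
Qed.

Lemma module_UAC_to_quotient :
  module_UAC mulU mulA laA raA -> module_UAC mulU mulQ laQ raQ.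
Proof.
move=> AUAC X lC rC lU rU Hmod Hcomm D HD.
have [I [le [y [Idir ycvg]]]] :=
  AUAC X _ _ lU rU (pull_module Hmod) Hcomm _ (pull_derivation HD).
exists I, le, y; split=> // eps eps0.
have [i0 near_i0] := ycvg _ (divr_gt0 eps0 (ltr0Sn _ 1)); exists i0 => i i0i c c1.
have [DD _ _ _ _] := HD; have [[[lCB _] [rCB _] _ _ _] _ _ _] := Hmod.
apply: (quotient_unit_ball_bound (E := fun z => D z - (lC z (y i) - rC (y i) z))) c1 => [|a a1].
  apply: additive_sub_fun => //; apply: additive_sub_fun.
    exact: (linear_additive (bilinear_linearl lCB (y i))).
  exact: (linear_additive (bilinear_linearl rCB (y i))).
exact: near_i0.
Qed.

Section FromQuotient.
Hypotheses (HA : banach_algebra mulA) (HUA : banach_bimodule mulU laA raA).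

Lemma module_UAA_from_quotient :
  module_UAA mulU mulQ laQ raQ -> module_UAA mulU mulA laA raA.
Proof.
move=> QUAA X lC rC lU rU Hmod Hcomm D HD.
have [I [le [y [Idir yx ycvg]]]] :=
  QUAA X _ _ lU rU (push_module HA HUA Hmod) Hcomm _ (push_dual_derivation HA HUA Hmod HD).
exists I, le, y; split=> // eps eps0; have [i0 near_i0] := ycvg _ eps0.
exists i0 => i i0i c x c1 x1.
have := near_i0 i i0i (q c) x (le_trans (quotient_norm_le c) c1) x1.
rewrite /dual_l /dual_r (eq_ract_quotient HA HUA Hmod x (liftK (q c))).
rewrite (eq_lact_quotient HA HUA Hmod x (liftK (q c))).
by rewrite (eq_dual_derivation_quotient HA HUA Hmod HD x (liftK (q c))).
Qed.

Lemma module_UAC_from_quotient :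
  module_UAC mulU mulQ laQ raQ -> module_UAC mulU mulA laA raA.
Proof.
move=> QUAC X lC rC lU rU Hmod Hcomm D HD.
have [I [le [y [Idir ycvg]]]] :=
  QUAC X _ _ lU rU (push_module HA HUA Hmod) Hcomm _ (push_derivation HA HUA Hmod HD).
exists I, le, y; split=> // eps eps0; have [i0 near_i0] := ycvg _ eps0.
exists i0 => i i0i c c1.
have := near_i0 i i0i (q c) (le_trans (quotient_norm_le c) c1).
rewrite (eq_ract_quotient HA HUA Hmod (y i) (liftK (q c))).
rewrite (eq_lact_quotient HA HUA Hmod (y i) (liftK (q c))).
by rewrite (eq_derivation_quotient HA HUA Hmod HD (liftK (q c))).
Qed.

End FromQuotient.

End Quotient.

Theorem lemma4p7 (K : numFieldType)
  (U : completeNormedModType K) (mulU : U -> U -> U)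
  (A : completeNormedModType K) (mulA : A -> A -> A)
  (laA : U -> A -> A) (raA : A -> U -> A)
  (Q : completeNormedModType K) (mulQ : Q -> Q -> Q)
  (laQ : U -> Q -> Q) (raQ : Q -> U -> Q) (q : A -> Q) :
  banach_algebra mulU ->
  banach_algebra mulA ->
  banach_bimodule mulU laA raA ->
  compatible_actions mulA laA raA ->
  quotient_by mulA laA raA (module_ideal mulA laA raA) mulQ laQ raQ q ->
  (module_UAA mulU mulA laA raA <-> module_UAA mulU mulQ laQ raQ) /\
  (module_UAC mulU mulA laA raA <-> module_UAC mulU mulQ laQ raQ).
Proof.
move=> _ HA HUA _ Hq; split; split.
- exact: (module_UAA_to_quotient Hq).
- exact: (module_UAA_from_quotient Hq HA HUA).
- exact: (module_UAC_to_quotient Hq).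
- exact: (module_UAC_from_quotient Hq HA HUA).
Qed.
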